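(* Let $k\ge t+3$ and $n\ge (k-t)(k-t+1)+t$, and let $\mathcal F\subseteq\binom{[n]}{k}$ be a $t$-intersecting family; write $\tau=\tau_t(\mathcal F)$. Then $$|\mathcal F|\le (k-t+1)^{\tau-t}\binom{\tau}{t}\binom{n-\tau}{k-\tau}.$$ Moreover, if $\mathcal B\subseteq\mathcal F$ is such that no member of $\mathcal B$ contains any member of $\mathcal T_t(\mathcal F)$, then $$|\mathcal B|\le (k-t+1)^{\tau-t+1}\binom{\tau}{t}\binom{n-\tau-1}{k-\tau-1},$$ with the convention $\binom{m}{-1}=0$.
   Context: A family is $t$-intersecting if any two members meet in at least $t$ elements. A $t$-cover of $\mathcal F$ is a set $S\subseteq[n]$ with $|S\cap F|\ge t$ for all $F\in\mathcal F$; $\tau_t(\mathcal F)$ is the minimum size of a $t$-cover, and $\mathcal T_t(\mathcal F)$ is the set of all $t$-covers of $\mathcal F$ of size $\tau_t(\mathcal F)$. *)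

From mathcomp Require Import all_boot all_order all_algebra.
Set Implicit Arguments. Unset Strict Implicit. Unset Printing Implicit Defensive.

Definition t_intersecting (n t : nat) (F : {set {set 'I_n}}) : bool :=
  [forall A in F, forall B in F, t <= #|A :&: B|].

Definition t_cover (n t : nat) (F : {set {set 'I_n}}) (S : {set 'I_n}) : bool :=
  [forall A in F, t <= #|S :&: A|].

(* tau_t(F): minimum size of a t-cover (default n if none exists, which
   cannot happen when all members have size >= t since [set: 'I_n] is one). *)
Definition tau_t (n t : nat) (F : {set {set 'I_n}}) : nat :=
  \big[minn/n]_(S : {set 'I_n} | t_cover t F S) #|S|.

Definition T_t (n t : nat) (F : {set {set 'I_n}}) : {set {set 'I_n}} :=
  [set S | t_cover t F S & #|S| == tau_t t F].

Definition binz (m : nat) (j : int) : nat :=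
  match j with
  | Posz j' => 'C(m, j')
  | Negz _ => 0
  end.

From mathcomp Require Import all_boot all_order all_algebra.
From mathcomp Require Import zify.
Import Order.TTheory.

Set Implicit Arguments.
Unset Strict Implicit.
Unset Printing Implicit Defensive.

(* Fix a minimum t-cover C.  Every member of F contains a t-subset X of C, so
   |F| is at most C(|C|, t) times the largest number of members containing a
   fixed X.  If |S| < tau, then S is not a t-cover: some member A meets S in
   fewer than t points, while every member B containing S meets A in at least
   t points, hence contains t - |S :&: A| of the k - |S :&: A| points of
   A :\: S.  Double counting the pairs (B, x) bounds the members containing S
   by (k - t + 1) times the members containing some S + x.  Iterating up to
   |S| = tau, where there are at most C(n - tau, k - tau) members, gives the
   first bound.  For the second one the iteration goes one step further, as a
   tau-set contained in a member of B cannot be a t-cover. *)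

Section Supsets.

Variable T : finType.
Implicit Types (G : {set {set T}}) (S A B C X : {set T}).

Lemma card_sep_sum (U : finType) (D : {set U}) (P : pred U) :
  #|[set u in D | P u]| = \sum_(u in D) P u.
Proof.
rewrite -sum1_card big_mkcond [RHS]big_mkcond /=.
by apply: eq_bigr => u _; rewrite inE; case: (u \in D); case: (P u).
Qed.

Lemma double_counting (U V : finType) (D : {set U}) (E : {set V})
    (R : U -> V -> bool) :
  \sum_(u in D) #|[set v in E | R u v]| = \sum_(v in E) #|[set u in D | R u v]|.
Proof.
under eq_bigr => u _ do rewrite card_sep_sum.
under [RHS]eq_bigr => v _ do rewrite card_sep_sum.
exact: exchange_big.
Qed.

Definition supsets G S := [set B in G | S \subset B].

Definition branch_set (k t : nat) G S A :=
  [/\ #|A| = k, #|S :&: A| < t & forall B, B \in supsets G S -> t <= #|B :&: A|].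

(* (k - j) / (t - j) <= k - t + 1 for j < t <= k, as
   (t - j) (k - t + 1) - (k - j) = (t - j - 1) (k - t). *)
Lemma leq_ratio_branch (k t j N M : nat) :
  j < t -> t <= k -> (t - j) * N <= (k - j) * M -> N <= (k - t + 1) * M.
Proof.
move=> jt tk tN.
have kM : (k - j) * M <= (t - j) * ((k - t + 1) * M).
  by rewrite mulnA leq_mul2r; apply/orP; right; nia.
by have := leq_trans tN kM; rewrite leq_pmul2l //; lia.
Qed.

Lemma card_supsets_branch (k t M : nat) G S A :
  t <= k -> branch_set k t G S A ->
  (forall x, x \notin S -> #|supsets G (x |: S)| <= M) ->
  #|supsets G S| <= (k - t + 1) * M.
Proof.
move=> tk [cardA SA meetA] boundM.
apply: (@leq_ratio_branch k t #|S :&: A|) => //.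
have -> : k - #|S :&: A| = #|A :\: S| by rewrite -cardA -(cardsID S A) setIC; lia.
apply: (@leq_trans (\sum_(B in supsets G S) #|[set x in A :\: S | x \in B]|)).
  rewrite mulnC -sum_nat_const; apply: leq_sum => B SB.
  have -> : [set x in A :\: S | x \in B] = (B :&: A) :\: S.
    by apply/setP => x; rewrite !inE; case: (x \in A); case: (x \in B); case: (x \in S).
  have BAS : #|B :&: A :&: S| <= #|S :&: A|.
    by apply: subset_leq_card; rewrite setIC subsetI subsetIl setIC subIset ?subsetIr.
  by have := meetA B SB; rewrite -(cardsID S (B :&: A)); lia.
rewrite -double_counting -sum_nat_const; apply: leq_sum => x.
rewrite inE => /andP [xS _]; apply: leq_trans (boundM x xS).
apply: subset_leq_card; apply/subsetP => B.
by rewrite !inE subUset sub1set; case: (B \in G); case: (S \subset B); case: (x \in B).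
Qed.

Lemma card_supsets_iter (k t L c : nat) G :
  t <= k ->
  (forall S, #|S| < L -> supsets G S != set0 -> exists A, branch_set k t G S A) ->
  (forall S, #|S| = L -> #|supsets G S| <= c) ->
  forall S, #|S| <= L -> #|supsets G S| <= (k - t + 1) ^ (L - #|S|) * c.
Proof.
move=> tk branch base.
suff iter m S : #|S| + m = L -> #|supsets G S| <= (k - t + 1) ^ m * c.
  by move=> S SL; apply: iter; lia.
elim: m S => [|m IHm] S SmL; first by rewrite mul1n base //; lia.
have [-> | nonempty] := eqVneq (supsets G S) set0; first by rewrite cards0.
have [A branchA] : exists A, branch_set k t G S A by apply: branch; lia.
rewrite expnS -mulnA; apply: (card_supsets_branch tk branchA) => x xS.
by apply: IHm; rewrite cardsU1 xS; lia.
Qed.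

Lemma card_supsets_uniform (k : nat) G S :
  (forall B, B \in G -> #|B| = k) ->
  #|supsets G S| <= 'C(#|T| - #|S|, k - #|S|).
Proof.
move=> uniform.
pose D := [set D : {set T} | D \subset ~: S & #|D| == k - #|S|].
have sub : supsets G S \subset (fun D => D :|: S) @: D.
  apply/subsetP => B; rewrite inE => /andP [BG SB].
  apply/imsetP; exists (B :\: S); last by rewrite setUC setDE setUIr setUCr setIT (setUidPr SB).
  rewrite inE {1}setDE subsetIr /=.
  by have := cardsID S B; rewrite (setIidPr SB) (uniform B BG) => <-; apply/eqP; lia.
rewrite (leq_trans (subset_leq_card sub)) // (leq_trans (leq_imset_card _ _)) //.
by rewrite cards_draws cardsCs setCK.
Qed.

Lemma supsets_uniform_large (k : nat) G S :
  (forall B, B \in G -> #|B| = k) -> k < #|S| -> supsets G S = set0.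
Proof.
move=> uniform kS; apply/setP => B; rewrite !inE.
apply/negbTE/andP => -[BG SB]; have := subset_leq_card SB; rewrite (uniform B BG); lia.
Qed.

Lemma card_le_tcover (t bound : nat) G C :
  (forall B, B \in G -> t <= #|C :&: B|) ->
  (forall X, X \subset C -> #|X| = t -> #|supsets G X| <= bound) ->
  #|G| <= 'C(#|C|, t) * bound.
Proof.
move=> cover boundX.
pose D := [set X : {set T} | X \subset C & #|X| == t].
apply: (@leq_trans (\sum_(B in G) #|[set X in D | X \subset B]|)).
  rewrite -sum1_card; apply: leq_sum => B BG.
  apply: (@leq_trans #|[set X : {set T} | X \subset C :&: B & #|X| == t]|).
    by rewrite cards_draws bin_gt0 cover.
  apply: subset_leq_card; apply/subsetP => X; rewrite !inE subsetI.
  by case/andP => /andP [-> ->] ->.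
rewrite -double_counting -cards_draws -sum_nat_const; apply: leq_sum => X.
by rewrite inE => /andP [XC /eqP Xt]; apply: boundX.
Qed.

Lemma card_le_branching_tcover (k t L c : nat) G C :
  t <= k -> #|C| <= L ->
  (forall B, B \in G -> t <= #|C :&: B|) ->
  (forall S, #|S| < L -> supsets G S != set0 -> exists A, branch_set k t G S A) ->
  (forall S, #|S| = L -> #|supsets G S| <= c) ->
  #|G| <= 'C(#|C|, t) * ((k - t + 1) ^ (L - t) * c).
Proof.
move=> tk CL cover branch base; apply: card_le_tcover cover _ => X XC Xt.
rewrite -{2}Xt; apply: card_supsets_iter => //.
exact: leq_trans (subset_leq_card XC) CL.
Qed.

End Supsets.

Section Covers.

Variables (n t : nat) (F : {set {set 'I_n}}).
Implicit Types (G : {set {set 'I_n}}) (S A B : {set 'I_n}).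

Lemma t_coverP S : reflect (forall A, A \in F -> t <= #|S :&: A|) (t_cover t F S).
Proof. exact: (iffP forall_inP). Qed.

Lemma t_intersectingP :
  reflect (forall A B, A \in F -> B \in F -> t <= #|A :&: B|) (t_intersecting t F).
Proof.
apply: (iffP forall_inP) => [h A B AF BF | h A AF]; last by apply/forall_inP => B; apply: h.
exact: forall_inP (h A AF) B BF.
Qed.

Lemma tau_t_le_cover S : t_cover t F S -> tau_t t F <= #|S|.
Proof. by move=> coverS; rewrite /tau_t -minEnat -leEnat bigmin_le_cond. Qed.

Lemma exists_min_t_cover :
  (forall A, A \in F -> t <= #|A|) -> exists2 C, t_cover t F C & #|C| = tau_t t F.
Proof.
move=> large.
have coverT : t_cover t F setT by apply/t_coverP => A AF; rewrite setTI large.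
have [C coverC minC] := arg_minnP (fun S : {set 'I_n} => #|S|) coverT.
exists C => //; apply/eqP; rewrite eqn_leq tau_t_le_cover // andbT.
rewrite /tau_t -minEnat -leEnat; apply: le_bigmin => [|S coverS].
  by rewrite leEnat; apply: leq_trans (max_card C) _; rewrite card_ord.
by rewrite leEnat; apply: minC.
Qed.

Lemma noncover_branch_set (k : nat) G S :
  (forall A, A \in F -> #|A| = k) -> t_intersecting t F -> G \subset F ->
  ~~ t_cover t F S -> exists A, branch_set k t G S A.
Proof.
move=> uniform /t_intersectingP meet GF /forall_inPn [A AF].
rewrite -ltnNge => SA; exists A; split; [exact: uniform | exact: SA | move=> B].
by rewrite inE => /andP [BG _]; apply: meet (subsetP GF B BG) AF.
Qed.

End Covers.

Theorem lemma3p2 (n k t : nat) (F : {set {set 'I_n}}) :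
  t + 3 <= k ->
  (k - t) * (k - t + 1) + t <= n ->
  (forall A, A \in F -> #|A| = k) ->
  t_intersecting t F ->
  let tau := tau_t t F in
  #|F| <= (k - t + 1) ^ (tau - t) * 'C(tau, t) * 'C(n - tau, k - tau)
  /\
  (forall B : {set {set 'I_n}}, B \subset F ->
     (forall A, A \in B -> forall S, S \in T_t t F -> ~~ (S \subset A)) ->
     #|B| <= (k - t + 1) ^ (tau - t + 1) * 'C(tau, t)
             * binz (n - tau - 1) (k%:Z - tau%:Z - 1)%R).
Proof.
move=> kt _ uniform meet tau.
have tk : t <= k by lia.
have [C coverC cardC] : exists2 C, t_cover t F C & #|C| = tau.
  by apply: exists_min_t_cover => A AF; rewrite uniform.
have meetC B : B \in F -> t <= #|C :&: B| by move/t_coverP: coverC; apply.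
have [-> | [A0 A0F]] := set_0Vmem F.
  by split => [|B]; [rewrite cards0 | rewrite subset0 => /eqP -> _; rewrite cards0].
have ttau : t <= tau by rewrite -cardC (leq_trans (meetC _ A0F)) ?subset_leq_card ?subsetIl.
split; rewrite mulnAC mulnC -{1}cardC.
  apply: card_le_branching_tcover meetC _ _; rewrite ?cardC //.
  - move=> S Stau _; apply: noncover_branch_set uniform meet (subxx F) _.
    by apply: contraTN Stau => /tau_t_le_cover; rewrite -leqNgt.
  - by move=> S <-; rewrite -[n in n - _](card_ord n); apply: card_supsets_uniform.
move=> B BF avoid.
have uniformB A : A \in B -> #|A| = k by move/(subsetP BF); apply: uniform.
rewrite (addnBAC _ ttau); apply: (card_le_branching_tcover (L := tau + 1)) tk _ _ _ _.
- by rewrite cardC leq_addr.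
- by move=> A AB; apply/meetC/(subsetP BF).
- move=> S Stau /set0Pn [A]; rewrite inE => /andP [AB SA].
  apply: noncover_branch_set uniform meet BF _; apply/negP => coverS.
  have Smin : S \in T_t t F.
    by rewrite inE coverS eqn_leq tau_t_le_cover //= andbT -ltnS -[(tau_t t F).+1]addn1.
  by have := avoid _ AB _ Smin; rewrite SA.
- move=> S Stau; have [ktau | taul] := ltnP k #|S|.
    by rewrite (supsets_uniform_large uniformB ktau) cards0.
  have -> : (k%:Z - tau%:Z - 1)%R = Posz (k - #|S|) by lia.
  have -> : n - tau - 1 = n - #|S| by lia.
  by rewrite -[n in n - _](card_ord n); apply: card_supsets_uniform.
Qed.
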